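(* Let $n \geq 2$ be a power of 2. Then $\mathrm{spar}(\mathsf{ADDR}_n) = n^{\log 3}$.
   Context: $\mathsf{ADDR}_n:\{0,1\}^{\log n+n}\to\{0,1\}$ is $\mathsf{ADDR}_n(x,y)=y_{\mathsf{bin}(x)}$ for $x\in\{0,1\}^{\log n}$, $y\in\{0,1\}^n$, where $\mathsf{bin}(x)\in[n]$ is the integer whose binary representation is $x$. $\mathrm{spar}(f)$ (M\''obius sparsity) is the number of nonzero coefficients in the unique expansion $f=\sum_S\widetilde f(S)\prod_{i\in S}z_i$ with real coefficients. Logarithms are base 2. *)

From HB Require Import structures.
From mathcomp Require Import all_boot all_order all_algebra.
From mathcomp Require Import reals exp.
Set Implicit Arguments. Unset Strict Implicit. Unset Printing Implicit Defensive.
Import Order.TTheory GRing.Theory Num.Theory.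
Local Open Scope ring_scope.

Definition cube (m : nat) := {ffun 'I_m -> bool}.

Definition bin (k : nat) (x : 'I_k -> bool) : nat := (\sum_(i < k) x i * 2 ^ i)%N.

(* ADDR on {0,1}^(k + n): first k bits are the address x, last n bits are y;
   output y_{bin(x)} (0-indexed). When bin(x) >= n (impossible if n = 2^k)
   we return false. *)
Definition ADDR (k n : nat) (z : cube (k + n)) : bool :=
  let x := fun i : 'I_k => z (lshift n i) in
  let y := fun j : 'I_n => z (rshift k j) in
  if insub (bin x) is Some j then y j else false.

Definition monomial (R : realType) (m : nat) (S : {set 'I_m}) (z : cube m) : R :=
  \prod_(i in S) (z i)%:R.

Definition moebius_expansion (R : realType) (m : nat) (f : cube m -> bool)
  (c : {set 'I_m} -> R) : Prop :=
  forall z : cube m, ((f z)%:R : R) = \sum_(S : {set 'I_m}) c S * monomial R S z.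

Definition nnz (R : realType) (m : nat) (c : {set 'I_m} -> R) : nat :=
  #|[set S : {set 'I_m} | c S != 0]|.

Definition log2 (R : realType) (x : R) : R := ln x / ln 2.

From HB Require Import structures.
From mathcomp Require Import all_boot all_order all_algebra.
From mathcomp Require Import reals exp.
From mathcomp Require Import zify.
Set Implicit Arguments.
Unset Strict Implicit.
Unset Printing Implicit Defensive.

Import Order.TTheory GRing.Theory Num.Theory.
Local Open Scope ring_scope.

(* Write z = (x, y) with x the k address bits.  Then ADDR(x, y) is the sum over
   a in {0,1}^k of [x = a] y_(bin a), and [x = a] is the product over i of x_i
   (if a_i = 1) or 1 - x_i (if a_i = 0).  Expanding, the monomial x^T y_(bin a)
   gets coefficient (-1)^|T \ a| when a <= T and 0 otherwise; distinct pairs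
   (a, T) give distinct monomials, so by uniqueness of the Moebius expansion the
   sparsity is the number of pairs a <= T in {0,1}^k, i.e. 3^k = n^(log 3). *)

Lemma bin_recr k (a : 'I_k.+1 -> bool) :
  bin a = (bin (fun i => a (widen_ord (leqnSn k) i)) + a ord_max * 2 ^ k)%N.
Proof. by rewrite /bin big_ord_recr. Qed.

Lemma bin_lt k (a : 'I_k -> bool) : (bin a < 2 ^ k)%N.
Proof.
elim: k a => [|k IH] a; first by rewrite /bin big_ord0.
have := IH (fun i => a (widen_ord (leqnSn k) i)).
by rewrite bin_recr expnS; case: (a ord_max) => /=; lia.
Qed.

Lemma bin_inj k (a b : 'I_k -> bool) : bin a = bin b -> a =1 b.
Proof.
elim: k a b => [|k IH] a b; first by move=> _ [].
rewrite !bin_recr => eq_ab.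
have lt_a := bin_lt (fun i => a (widen_ord (leqnSn k) i)).
have lt_b := bin_lt (fun i => b (widen_ord (leqnSn k) i)).
have eq_max : a ord_max = b ord_max.
  by move: eq_ab lt_a lt_b; case: (a _); case: (b _) => /=; lia.
rewrite eq_max in eq_ab; move/addIn/IH: eq_ab => eq_low i.
have [lt_ik | ge_ik] := ltnP i k.
  by have -> : i = widen_ord (leqnSn k) (Ordinal lt_ik) by apply: val_inj.
have -> : i = ord_max by apply/val_inj/eqP; rewrite eqn_leq -ltnS ltn_ord ge_ik.
exact: eq_max.
Qed.

Section MoebiusUniqueness.
Variables (R : realType) (m : nat).

Lemma monomial_indicator (S T : {set 'I_m}) :
  monomial R T [ffun i => i \in S] = (T \subset S)%:R.
Proof.
rewrite /monomial; have [sub_TS | /subsetPn[i iT iNS]] := boolP (T \subset S).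
  by apply: big1 => i iT; rewrite ffunE (subsetP sub_TS i iT).
by rewrite (bigD1 i) //= ffunE (negbTE iNS) mul0r.
Qed.

(* Evaluating at the indicator of S isolates e S modulo the e T with T \proper S. *)
Lemma monomials_free (e : {set 'I_m} -> R) :
  (forall z : cube m, \sum_S e S * monomial R S z = 0) -> e =1 (fun=> 0).
Proof.
move=> e_sum0 S; elim: {S}_.+1 {-2}S (ltnSn #|S|) => // N IH S lt_SN.
have := e_sum0 [ffun i => i \in S].
under eq_bigr do rewrite monomial_indicator.
rewrite (bigD1 S) //= subxx mulr1 big1 ?addr0 // => T /negbTE neq_TS.
have [sub_TS | _] := boolP (T \subset S); last by rewrite mulr0.
rewrite IH ?mul0r // -ltnS (leq_trans _ lt_SN) // ltnS.
by apply: proper_card; rewrite properEneq neq_TS sub_TS.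
Qed.

Lemma moebius_expansion_unique (f : cube m -> bool) (c d : {set 'I_m} -> R) :
  moebius_expansion f c -> moebius_expansion f d -> c =1 d.
Proof.
move=> exp_c exp_d S; apply/eqP; rewrite -subr_eq0; apply/eqP.
apply: (monomials_free (e := fun S => c S - d S)) => z.
by under eq_bigr do rewrite mulrBl; rewrite sumrB -exp_c -exp_d subrr.
Qed.

Lemma nnz_moebius_expansion (f : cube m -> bool) (c d : {set 'I_m} -> R) :
  moebius_expansion f c -> moebius_expansion f d -> nnz c = nnz d.
Proof.
move=> exp_c exp_d; apply: eq_card => S.
by rewrite !inE (moebius_expansion_unique exp_c exp_d).
Qed.

End MoebiusUniqueness.

Section Pushforward.
Variables (R : pzSemiRingType) (I J : finType) (g : I -> J) (w : I -> R).

Definition pushforward (j : J) : R := \sum_(i | g i == j) w i.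

Lemma sum_pushforward (F : J -> R) :
  \sum_j pushforward j * F j = \sum_i w i * F (g i).
Proof.
rewrite (partition_big g xpredT) //=; apply: eq_bigr => j _.
by rewrite /pushforward big_distrl; apply: eq_bigr => i /eqP ->.
Qed.

Lemma pushforward_out j : (forall i, g i != j) -> pushforward j = 0.
Proof. by move=> g_neq; rewrite /pushforward big_pred0 // => i; apply/negbTE. Qed.

Hypothesis g_inj : injective g.

Lemma pushforward_inj i : pushforward (g i) = w i.
Proof. by rewrite /pushforward (big_pred1 i) // => i'; rewrite /= (inj_eq g_inj). Qed.

Lemma card_support_pushforward :
  #|[set j | pushforward j != 0]| = #|[set i | w i != 0]|.
Proof.
rewrite -(card_imset _ g_inj); apply: eq_card => j; rewrite inE.
apply/idP/imsetP => [|[i w_i ->]]; last by rewrite pushforward_inj; rewrite inE in w_i.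
case: (pickP (fun i => g i == j)) => [i /eqP <- | g_neq].
  by rewrite pushforward_inj => w_i; exists i; rewrite ?inE.
by rewrite pushforward_out ?eqxx // => i; rewrite g_neq.
Qed.

End Pushforward.

Lemma nat_of_forall (I : finType) (b : pred I) : [forall i, b i] = (\prod_i b i)%N :> nat.
Proof.
have [/forallP b_all | /forallPn[i /negbTE b_i]] := boolP [forall i, b i].
  by rewrite big1 // => i _; rewrite b_all.
by rewrite (bigD1 i) //= b_i.
Qed.

Lemma card_implyb_pairs (I : finType) :
  #|[set p : {ffun I -> bool} * {ffun I -> bool} | [forall i, p.1 i ==> p.2 i]]| =
  (3 ^ #|I|)%N.
Proof.
rewrite -sum1_card big_mkcond /=.
under eq_bigr => p _ do rewrite inE -[if _ then _ else _]/(nat_of_bool _) nat_of_forall.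
rewrite -(pair_bigA _ (fun a T : {ffun I -> bool} => \prod_i (a i ==> T i : nat))%N) /=.
under eq_bigr do rewrite -(bigA_distr_bigA (fun i t => (_ ==> t : nat))) /=.
rewrite -(bigA_distr_bigA (fun i a => \sum_t (a ==> t : nat))%N) /=.
by rewrite (eq_bigr (fun=> 3%N)) ?prod_nat_const // => i _; rewrite !big_bool.
Qed.

Definition addr k (a : 'I_k -> bool) : 'I_(2 ^ k) := Ordinal (bin_lt a).

Lemma addr_inj k : injective (@addr k : cube k -> 'I_(2 ^ k)).
Proof. by move=> a b /(congr1 val)/bin_inj eq_ab; apply/ffunP. Qed.

Section AddressingExpansion.
Variables (R : realType) (k : nat).
Local Notation n := (2 ^ k)%N.

Definition addr_bits (z : cube (k + n)) : cube k := [ffun i => z (lshift n i)].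

Lemma ADDR_addr (z : cube (k + n)) : ADDR z = z (rshift k (addr (addr_bits z))).
Proof.
rewrite /ADDR insubT ?bin_lt // => ?; congr (z (rshift k _)); apply: val_inj.
by apply: eq_bigr => i _; rewrite ffunE.
Qed.

(* [eq_indicator_coef a t] is the coefficient of x^t in the polynomial [x == a],
   i.e. in x if a is true and in 1 - x otherwise. *)
Definition eq_indicator_coef (a t : bool) : R := if a then t%:R else (-1) ^+ t.

Lemma eq_indicator_coefE (a x : bool) :
  \sum_t eq_indicator_coef a t * x%:R ^+ t = (a == x)%:R.
Proof.
by case: a; case: x;
  rewrite big_bool /= ?(expr0, expr1, mulr1, mul1r, mul0r, addr0, mulN1r, addNr, oppr0, add0r).
Qed.

Lemma eq_indicator_coef_neq0 (a t : bool) : (eq_indicator_coef a t != 0) = (a ==> t).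
Proof. by case: a; case: t; rewrite /= ?oner_neq0 ?eqxx // expr1 oppr_eq0 oner_neq0. Qed.

(* The pair (a, T) stands for the monomial x^T y_(bin a). *)
Definition addr_set (p : cube k * cube k) : {set 'I_(k + n)} :=
  [set s | match split s with inl i => p.2 i | inr j => j == addr p.1 end].

Definition addr_coef (p : cube k * cube k) : R :=
  \prod_i eq_indicator_coef (p.1 i) (p.2 i).

Definition addr_expansion : {set 'I_(k + n)} -> R := pushforward addr_set addr_coef.

Lemma monomial_addr_set p (z : cube (k + n)) :
  monomial R (addr_set p) z =
  (\prod_i (addr_bits z i)%:R ^+ p.2 i) * (z (rshift k (addr p.1)))%:R.
Proof.
rewrite /monomial big_mkcond big_split_ord /=; congr (_ * _).
  by apply: eq_bigr => i _; rewrite inE (unsplitK (inl _)) ffunE; case: (p.2 i).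
rewrite (bigD1 (addr p.1)) //= inE (unsplitK (inr _)) eqxx big1 ?mulr1 // => j /negbTE neq_j.
by rewrite inE (unsplitK (inr _)) neq_j.
Qed.

Lemma sum_addr_coef (a x : cube k) :
  \sum_T addr_coef (a, T) * \prod_i (x i)%:R ^+ T i = (a == x)%:R.
Proof.
under eq_bigr do rewrite -big_split /=.
rewrite -(bigA_distr_bigA (fun i t => eq_indicator_coef (a i) t * (x i)%:R ^+ t)) /=.
under eq_bigr do rewrite eq_indicator_coefE.
rewrite -natr_prod -nat_of_forall; congr ((nat_of_bool _)%:R).
by apply/forallP/eqP => [eq_ax | -> //]; apply/ffunP => i; apply/eqP.
Qed.

Lemma addr_expansionP : moebius_expansion (@ADDR k n) addr_expansion.
Proof.
move=> z; rewrite sum_pushforward.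
rewrite -(pair_bigA _ (fun a T => addr_coef (a, T) * monomial R (addr_set (a, T)) z)) /=.
under eq_bigr => a _.
  under eq_bigr do rewrite monomial_addr_set /= mulrA.
  rewrite -big_distrl sum_addr_coef.
  over.
rewrite (bigD1 (addr_bits z)) //= eqxx mul1r big1 ?addr0 -?ADDR_addr //.
by move=> a /negbTE ->; rewrite mul0r.
Qed.

Lemma addr_coef_neq0 p : (addr_coef p != 0) = [forall i, p.1 i ==> p.2 i].
Proof.
apply/prodf_neq0/forallP => [coef_neq0 i | imp i _]; last by rewrite eq_indicator_coef_neq0.
by rewrite -eq_indicator_coef_neq0 coef_neq0.
Qed.

Lemma addr_set_inj : injective addr_set.
Proof.
move=> [a T] [b U] /setP eq_set.
have -> : T = U.
  by apply/ffunP => i; have := eq_set (lshift n i); rewrite !inE (unsplitK (inl _)).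
have := eq_set (rshift k (addr a)); rewrite !inE (unsplitK (inr _)) eqxx.
by move=> /esym/eqP/addr_inj ->.
Qed.

Lemma nnz_addr_expansion : nnz addr_expansion = (3 ^ k)%N.
Proof.
rewrite /nnz card_support_pushforward; last exact: addr_set_inj.
rewrite -[in RHS](card_ord k) -card_implyb_pairs; apply: eq_card => p.
by rewrite !inE addr_coef_neq0.
Qed.

End AddressingExpansion.

Lemma powR_exp2_log2 (R : realType) (x : R) k :
  0 < x -> (2 ^ k)%N%:R `^ log2 x = x ^+ k.
Proof.
move=> x_gt0; have ln2_neq0 : ln (2 : R) != 0 by rewrite gt_eqF // ln_gt0 // ltr1n.
rewrite /powR natrX gt_eqF ?exprn_gt0 ?ltr0n // lnXn ?ltr0n //.
by rewrite /log2 -[ln 2 *+ k]mulr_natr mulrA divfK // expRM_natr lnK.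
Qed.

Theorem claimA3 (R : realType) (n k : nat) (hn : (2 <= n)%N) (hk : n = (2 ^ k)%N) :
  (exists c : {set 'I_(k + n)} -> R, moebius_expansion (@ADDR k n) c) /\
  (forall c : {set 'I_(k + n)} -> R, moebius_expansion (@ADDR k n) c ->
     (nnz c)%:R = powR (n%:R : R) (log2 (3 : R))).
Proof.
subst n; split; first by exists (@addr_expansion R k); apply: addr_expansionP.
move=> c exp_c.
rewrite (nnz_moebius_expansion exp_c (@addr_expansionP R k)) nnz_addr_expansion.
by rewrite powR_exp2_log2 ?ltr0n // natrX.
Qed.
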